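(* For all integers $n\ge 3$ and $m\ge 1$, $\alpha_{n,m}\ge\alpha_{n+1,m}$.
   Context: Let $\mathbb{K}$ be a field. For $n\ge 3$, $Q_n$ is the cycle graph on vertices $1,\dots,n$ (edges $\{i,i+1\}$ for $1\le i\le n-1$ and $\{n,1\}$); $B_n$ is the simplicial complex on $\{0,\dots,n+1\}$ whose facets are $\{0,i,j\}$ and $\{n+1,i,j\}$ for each edge $\{i,j\}$ of $Q_n$ (boundary of the bipyramid over the $n$-gon); $I_{B_n}\subset R=\mathbb{K}[x_0,\dots,x_{n+1}]$ is its Stanley-Reisner ideal, generated by $\prod_{i\in\tau}x_i$ over non-faces $\tau$. For a homogeneous ideal $I$, $I^{(m)}=R\cap\bigcap_{P\in\mathrm{Ass}(I)}I^mR_P$, $\alpha(I)=\min\{t:I_t\ne0\}$, and $\alpha_{n,m}:=\alpha(I_{B_n}^{(m)})$. *)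

From HB Require Import structures.
From mathcomp Require Import all_boot all_order all_algebra.
From mathcomp Require Import mpoly.
From Stdlib Require Import ClassicalEpsilon.
Set Implicit Arguments. Unset Strict Implicit. Unset Printing Implicit Defensive.
Import GRing.Theory.
Local Open Scope ring_scope.

Section Defs.
Variable K : fieldType.
Variable N : nat.
Local Notation R := {mpoly K[N]}.

Definition rset := R -> Prop.

Definition is_ideal (I : rset) : Prop :=
  [/\ I 0, (forall a b, I a -> I b -> I (a + b)) & (forall r a, I a -> I (r * a))].

Definition is_prime_ideal (P : rset) : Prop :=
  [/\ is_ideal P, ~ P 1 & (forall a b, P (a * b) -> P a \/ P b)].

Definition gen_ideal (S : rset) : rset :=
  fun f => exists (k : nat) (r s : 'I_k -> R),
    (forall j, S (s j)) /\ f = \sum_(j < k) r j * s j.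

Fixpoint ideal_pow (I : rset) (m : nat) : rset :=
  match m with
  | 0%N => fun _ => True
  | m'.+1 => gen_ideal (fun f => exists a b, ideal_pow I m' a /\ I b /\ f = a * b)
  end.

Definition is_associated_prime (I P : rset) : Prop :=
  is_prime_ideal P /\ exists f : R, forall g, P g <-> I (g * f).

(* I^m R_P contracted to R: f in R with f = g/s, g in I^m, s notin P.
   (R is a domain, so f = g/s in R_P iff s f = g.) *)
Definition contract_local_pow (I P : rset) (m : nat) : rset :=
  fun f => exists s g, ~ P s /\ ideal_pow I m g /\ s * f = g.

(* symbolic power I^(m) = R ∩ ⋂_{P ∈ Ass(I)} I^m R_P *)
Definition symbolic_power (I : rset) (m : nat) : rset :=
  fun f => forall P, is_associated_prime I P -> contract_local_pow I P m f.

Definition homog_deg (t : nat) (p : R) : bool :=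
  all (fun mm => mdeg mm == t) (msupp p).

Definition deg_nonzero (I : rset) (t : nat) : Prop :=
  exists f, I f /\ f != 0 /\ homog_deg t f.

Definition deg_nonzerob (I : rset) (t : nat) : bool :=
  if excluded_middle_informative (deg_nonzero I t) then true else false.

(* alpha(I) = min { t : I_t <> 0 }  (0 by convention if no such t) *)
Definition alpha (I : rset) : nat :=
  match excluded_middle_informative (exists t, deg_nonzerob I t) with
  | left h => ex_minn h
  | right _ => 0%N
  end.
End Defs.

(* B_n: vertices 0..n+1 of type 'I_(n.+2); cycle Q_n on 1..n *)
Definition cycle_edge (n : nat) (i j : nat) : bool :=
  [&& 1 <= i, i < n & j == i.+1]%N || ((i == n) && (j == 1%N)).

Definition Bn_facet (n : nat) (F : {set 'I_(n.+2)}) : bool :=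
  [exists i : 'I_(n.+2), exists j : 'I_(n.+2),
     cycle_edge n i j &&
     ((F == [set ord0; i; j]) || (F == [set ord_max; i; j]))].

Definition Bn_face (n : nat) (tau : {set 'I_(n.+2)}) : bool :=
  [exists F, @Bn_facet n F && (tau \subset F)].

Definition SR_ideal (K : fieldType) (n : nat) : rset K n.+2 :=
  gen_ideal (fun f => exists tau : {set 'I_(n.+2)},
     ~~ @Bn_face n tau /\ f = \prod_(i in tau) 'X_i).

Definition alpha_nm (K : fieldType) (n m : nat) : nat :=
  alpha (symbolic_power (@SR_ideal K n) m).

From mathcomp Require Import all_boot all_algebra mpoly zify.
From Stdlib Require Import ClassicalEpsilon.
Set Implicit Arguments. Unset Strict Implicit. Unset Printing Implicit Defensive.
Import GRing.Theory.
Local Open Scope ring_scope.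

(* Let I be the Stanley-Reisner ideal of a simplicial complex and, for a
   face A, let outdeg A b be the number of variables of x^b (with multiplicity)
   outside A.  For a facet F, the prime P_F generated by the variables outside F
   equals (I : x^F), and grading by outdeg F (the substitution x_j |-> t x_j for
   j outside F) shows that I^m has t-order >= m while an s outside P_F has
   nonzero constant term; hence every monomial x^b of an element of I^(m)
   satisfies outdeg A b >= m for all faces A.  Conversely such an x^b lies in
   I^(m): an associated prime (I : g) misses x^(mF) for a facet F containing the
   support of a monomial of g outside I, while x^(mF) x^b lies in I^m.
   So alpha(I^(m)) is the least degree of such a monomial.  Moving the exponent
   of the apex n+1 of B_n to the apex n+2 of B_(n+1) preserves the degree and
   this condition, since the preimage of a face of B_(n+1) is a face of B_n. *)

Section IdealGeneration.
Variables (K : fieldType) (N : nat).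
Implicit Types (S : rset K N).

Lemma gen_ideal0 S : gen_ideal S 0.
Proof. by exists 0%N, (fun _ => 0), (fun _ => 0); split; [case | rewrite big_ord0]. Qed.

Lemma gen_idealD S a b : gen_ideal S a -> gen_ideal S b -> gen_ideal S (a + b).
Proof.
move=> [k1 [r1 [s1 [Ss1 ->]]]] [k2 [r2 [s2 [Ss2 ->]]]].
exists (k1 + k2)%N, (fun j => match split j with inl x => r1 x | inr y => r2 y end),
  (fun j => match split j with inl x => s1 x | inr y => s2 y end); split.
  by move=> j; case: (split j).
rewrite big_split_ord /=; congr (_ + _); apply: eq_bigr => j _.
  by have /= -> := @unsplitK k1 k2 (inl j).
by have /= -> := @unsplitK k1 k2 (inr j).
Qed.

Lemma gen_idealMl S r a : gen_ideal S a -> gen_ideal S (r * a).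
Proof.
move=> [k [r1 [s1 [Ss1 ->]]]]; exists k, (fun j => r * r1 j), s1; split => //.
by rewrite big_distrr; apply: eq_bigr => j _; exact: mulrA.
Qed.

Lemma gen_ideal_sub S s : S s -> gen_ideal S s.
Proof.
by move=> Ss; exists 1%N, (fun _ => 1), (fun _ => s); split; rewrite ?big_ord1 ?mul1r.
Qed.

Lemma gen_ideal_ind S (P : {mpoly K[N]} -> Prop) :
  P 0 -> (forall a b, P a -> P b -> P (a + b)) ->
  (forall r s, S s -> P (r * s)) -> forall h, gen_ideal S h -> P h.
Proof.
move=> P0 PD PM h [k [r [s [Ss ->]]]].
by elim/big_ind: _ => // j _; apply: PM.
Qed.

End IdealGeneration.

Section Monomials.
Variable N : nat.
Implicit Types (A B F : {set 'I_N}) (b e : 'X_{1..N}).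

Definition mnm_supp b : {set 'I_N} := [set i | (0 < b i)%N].

Definition mnm_ind A : 'X_{1..N} := [multinom (i \in A : nat) | i < N].

Lemma mnm_indE A i : mnm_ind A i = (i \in A).
Proof. by rewrite mnmE. Qed.

Lemma mnm_supp_ind_addm F b : mnm_supp (mnm_ind F + b)%MM = F :|: mnm_supp b.
Proof. by apply/setP => i; rewrite !inE mnmDE mnm_indE; case: (i \in F). Qed.

Lemma mnm_ind_setU1 F j : j \notin F -> (mnm_ind F + U_(j))%MM = mnm_ind (j |: F).
Proof.
move=> jF; apply/mnmP => i; rewrite mnmDE mnm1E !mnm_indE !inE eq_sym.
by case: eqP => [->|_]; rewrite ?(negbTE jF) ?addn0.
Qed.

Definition outdeg A b : nat := (\sum_(i < N | i \notin A) b i)%N.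

Lemma outdegD A b e : outdeg A (b + e)%MM = (outdeg A b + outdeg A e)%N.
Proof. by rewrite /outdeg -big_split; apply: eq_bigr => i _; rewrite mnmDE. Qed.

Lemma outdeg_mnm1 A j : outdeg A U_(j) = (j \notin A).
Proof.
rewrite /outdeg; case: (boolP (j \in A)) => jA /=.
  by rewrite big1 // => i; rewrite mnm1E; case: eqP => // <-; rewrite jA.
rewrite (bigD1 j) //= mnm1E eqxx big1 // => i /andP [_ ij].
by rewrite mnm1E eq_sym (negbTE ij).
Qed.

Lemma outdeg_eq0 A b : (outdeg A b == 0) = (mnm_supp b \subset A).
Proof.
rewrite sum_nat_eq0; apply/forall_inP/subsetP => [Ab i|bA i iA].
  by rewrite inE lt0n; apply: contraTT => /Ab ->.
by apply/eqP; apply: contraNeq iA; rewrite -lt0n => bi; apply: bA; rewrite inE.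
Qed.

Lemma leq_outdeg A b i : i \notin A -> (b i <= outdeg A b)%N.
Proof. by move=> iA; rewrite /outdeg (bigD1 i) //= leq_addr. Qed.

Lemma outdegS A B b : A \subset B -> (outdeg B b <= outdeg A b)%N.
Proof.
move=> AB; rewrite /outdeg [X in (X <= _)%N]big_mkcond [X in (_ <= X)%N]big_mkcond.
apply: leq_sum => i _; case: ifP => //= iB.
by rewrite (contra (subsetP AB i)) ?iB.
Qed.

Lemma outdeg_subm1 A b j : j \notin A -> (0 < b j)%N ->
  b = (b - U_(j) + U_(j))%MM /\ outdeg A b = (outdeg A (b - U_(j))%MM).+1.
Proof.
move=> jA bj; have bE : b = (b - U_(j) + U_(j))%MM.
  by rewrite submK //; apply/mnm_lepP => i; rewrite mnm1E; case: eqP => [<-|].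
by split; rewrite // {1}bE outdegD outdeg_mnm1 jA addn1.
Qed.

End Monomials.

Section MonomialPush.
Variables (N M : nat) (f : 'I_N -> 'I_M).
Implicit Types (b : 'X_{1..N}).

Definition mnm_push b : 'X_{1..M} :=
  [multinom (\sum_(v < N | f v == w) b v)%N | w < M].

Lemma mdeg_push b : mdeg (mnm_push b) = mdeg b.
Proof.
rewrite !mdegE [RHS](partition_big f predT) //=.
by apply: eq_bigr => w _; rewrite mnmE.
Qed.

Lemma outdeg_push (A : {set 'I_M}) b :
  outdeg A (mnm_push b) = outdeg (f @^-1: A) b.
Proof.
rewrite [RHS](partition_big f (fun w => w \notin A)) => [|v]; last by rewrite inE.
apply: eq_bigr => w Aw; rewrite mnmE; apply: eq_bigl => v.
by rewrite inE; case: eqP => [->|]; rewrite ?Aw ?andbF.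
Qed.

End MonomialPush.

Section OutdegGrading.
Variables (K : fieldType) (N : nat).
Local Notation R := {mpoly K[N]}.
Implicit Types (F : {set 'I_N}) (h : R).

Definition outdeg_ge F k h := forall b, b \in msupp h -> (k <= outdeg F b)%N.

Lemma outdeg_ge0 F k : outdeg_ge F k 0.
Proof. by move=> b; rewrite msupp0. Qed.

Lemma outdeg_geD F k a c : outdeg_ge F k a -> outdeg_ge F k c -> outdeg_ge F k (a + c).
Proof. by move=> Ha Hc b /msuppD_le; rewrite mem_cat => /orP [/Ha | /Hc]. Qed.

Lemma outdeg_geM F k l a c :
  outdeg_ge F k a -> outdeg_ge F l c -> outdeg_ge F (k + l) (a * c).
Proof.
move=> Ha Hc b /msuppM_le /allpairsP [[b1 b2] [/= /Ha k_b1 /Hc l_b2 ->]].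
by rewrite outdegD leq_add.
Qed.

Lemma outdeg_geMl F k r a : outdeg_ge F k a -> outdeg_ge F k (r * a).
Proof. by rewrite -[k]add0n; apply: outdeg_geM. Qed.

Definition tlift_var F (i : 'I_N) : {poly R} :=
  if i \in F then ('X_i)%:P else ('X_i)%:P * 'X.

Definition tlift_const : {rmorphism K -> {poly R}} := (polyC \o mpolyC N (R := K))%FUN.

(* Locked: letting unification unfold [mmap] makes rewriting intractable. *)
Fact tlift_key : unit. Proof. by []. Qed.
Definition tlift F : R -> {poly R} :=
  locked_with tlift_key (mmap tlift_const (tlift_var F)).

Lemma tlift0 F : tlift F 0 = 0. Proof. by rewrite /tlift unlock rmorph0. Qed.
Lemma tlift1 F : tlift F 1 = 1. Proof. by rewrite /tlift unlock rmorph1. Qed.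
Lemma tliftD F a c : tlift F (a + c) = tlift F a + tlift F c.
Proof. by rewrite /tlift unlock rmorphD. Qed.
Lemma tliftM F a c : tlift F (a * c) = tlift F a * tlift F c.
Proof. by rewrite /tlift unlock rmorphM. Qed.

Lemma coef_tlift F h k b : ((tlift F h)`_k)@_b = if outdeg F b == k then h@_b else 0.
Proof.
have mmap1E c : mmap1 (tlift_var F) c = ('X_[c])%:P * 'X^(outdeg F c).
  rewrite /mmap1 /outdeg mpolyXE_id rmorph_prod -prodrXr [X in _ * X]big_mkcond.
  rewrite -big_split; apply: eq_bigr => i _; rewrite /tlift_var.
  by case: (i \in F); rewrite /= ?mulr1 ?exprMn rmorphXn.
rewrite /tlift unlock /mmap coef_sum raddf_sum /=.
under eq_bigr => c _ do rewrite mmap1E mulrA -rmorphM coefCM coefXn mulr_natr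
  mcoeffMn mul_mpolyC mcoeffZ mcoeffX.
case: (boolP (b \in msupp h)) => hb; last first.
  rewrite memN_msupp_eq0 // if_same big_seq big1 // => c hc.
  by rewrite (_ : c == b = false) ?mulr0 ?mul0rn //; apply: contraNF hb => /eqP <-.
rewrite (bigD1_seq b) ?msupp_uniq //= eqxx mulr1 big1 ?addr0.
  by rewrite eq_sym; case: eqP.
by move=> c /negbTE cb; rewrite cb mulr0 mul0rn.
Qed.

Lemma outdeg_geP F k h : outdeg_ge F k h <-> forall j, (j < k)%N -> (tlift F h)`_j = 0.
Proof.
split=> [hk j jk | hk b hb]; first apply/mpolyP => b.
  rewrite coef_tlift mcoeff0; case: eqP => // bj.
  by case: (boolP (b \in msupp h)) => [/hk|/memN_msupp_eq0 //]; rewrite bj leqNgt jk.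
rewrite leqNgt; apply: contraL hb => /hk /(congr1 (mcoeff b)).
by rewrite coef_tlift eqxx mcoeff0 mcoeff_msupp => ->; rewrite eqxx.
Qed.

Lemma poly_low_coef_cancel (S : idomainType) (p q : {poly S}) k : p`_0 != 0 ->
  (forall j, (j < k)%N -> (p * q)`_j = 0) -> forall j, (j < k)%N -> q`_j = 0.
Proof.
move=> p0 pq; elim/ltn_ind => j IH jk; move/eqP: (pq j jk).
rewrite coefMr big_ord_recr /= subnn big1 ?add0r => [|i _].
  by rewrite mulf_eq0 (negbTE p0) => /eqP.
by rewrite IH ?mulr0 // (ltn_trans _ jk).
Qed.

Lemma outdeg_geMl_cancel F k s h :
  (tlift F s)`_0 != 0 -> outdeg_ge F k (s * h) -> outdeg_ge F k h.
Proof.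
move=> s0 /outdeg_geP sh; apply/outdeg_geP.
by apply: (poly_low_coef_cancel s0) => j /sh; rewrite tliftM.
Qed.

(* The prime ideal generated by the variables outside F. *)
Definition outside_prime F : rset K N := fun h => (tlift F h)`_0 = 0.

Lemma outside_primeE F h : outside_prime F h <-> outdeg_ge F 1 h.
Proof.
by split=> [h0 | /outdeg_geP]; [apply/outdeg_geP => -[] | apply].
Qed.

Lemma outside_prime_prime F : is_prime_ideal (outside_prime F).
Proof.
rewrite /outside_prime; split; first split.
- by rewrite tlift0 coef0.
- by move=> a c; rewrite tliftD coefD => -> ->; rewrite addr0.
- by move=> r a; rewrite tliftM coef0M => ->; rewrite mulr0.
- by rewrite tlift1 coef1; apply/eqP; rewrite oner_eq0.
- move=> a c; rewrite tliftM coef0M => /eqP; rewrite mulf_eq0.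
  by case/orP => /eqP; [left | right].
Qed.

End OutdegGrading.

Section StanleyReisner.
Variables (K : fieldType) (N : nat).
Local Notation R := {mpoly K[N]}.
Variable face : {set 'I_N} -> bool.
Hypothesis faceS : forall A B : {set 'I_N}, B \subset A -> face A -> face B.
Implicit Types (A F : {set 'I_N}) (h : R).

Definition stanley_reisner : rset K N :=
  gen_ideal (fun f => exists tau, ~~ face tau /\ f = \prod_(i in tau) 'X_i).

Local Notation I := stanley_reisner.

Lemma prod_X_mnm_ind A : \prod_(i in A) 'X_i = 'X_[mnm_ind A] :> R.
Proof.
rewrite mpolyXE_id big_mkcond /=; apply: eq_bigr => i _.
by rewrite mnm_indE; case: (i \in A); rewrite ?expr1 ?expr0.
Qed.

Lemma stanley_reisnerP h : I h <-> forall b, b \in msupp h -> ~~ face (mnm_supp b).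
Proof.
split.
  move: h; apply: gen_ideal_ind => [b | a c Ha Hc b /msuppD_le | r _ [tau [tau_face ->]] b].
  - by rewrite msupp0.
  - by rewrite mem_cat => /orP [/Ha | /Hc].
  rewrite prod_X_mnm_ind (perm_mem (msuppMX _ _)) => /mapP [c _ ->].
  apply: contra tau_face; apply: faceS; rewrite mnm_supp_ind_addm.
  exact: subsetUl.
move=> hb; rewrite (mpolyE h) big_seq; apply: big_ind => [|a c|b /hb b_face].
- exact: gen_ideal0.
- exact: gen_idealD.
rewrite -mul_mpolyC; apply: gen_idealMl.
have -> : b = (b - mnm_ind (mnm_supp b) + mnm_ind (mnm_supp b))%MM.
  rewrite submK //; apply/mnm_lepP => i; rewrite mnm_indE inE; lia.
rewrite mpolyXD; apply: gen_idealMl; apply: gen_ideal_sub.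
by exists (mnm_supp b); rewrite prod_X_mnm_ind.
Qed.

Definition facet F := face F /\ forall j, j \notin F -> ~~ face (j |: F).

Lemma face_sub_facet A : face A -> exists2 F, facet F & A \subset F.
Proof.
move=> A_face; have [F /andP [F_face AF] F_max] :=
  @arg_maxnP _ A (fun F => face F && (A \subset F)) (fun F => #|F|)
    (introT andP (conj A_face (subxx A))).
exists F => //; split => // j jF; apply/negP => jF_face.
have := F_max (j |: F); rewrite jF_face (subset_trans AF (subsetUr _ _)) => /(_ isT).
by rewrite cardsU1 jF /= add1n ltnn.
Qed.

Lemma facet_setU_face F A : facet F -> face (F :|: A) = (A \subset F).
Proof.
move=> [F_face F_max]; apply/idP/idP => [FA_face | /setUidPl -> //].
apply/subsetP => j jA; apply: contraT => jF; have := F_max j jF.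
by rewrite (faceS _ FA_face) // setUC setUS // sub1set.
Qed.

Lemma ideal_pow_outdeg_ge F k h : face F -> ideal_pow I k h -> outdeg_ge F k h.
Proof.
move=> F_face; elim: k h => [h _ b _ // | k IH]; apply: gen_ideal_ind.
- exact: outdeg_ge0.
- exact: outdeg_geD.
move=> r _ [a [c [Ha [Ic ->]]]]; apply: outdeg_geMl; rewrite -addn1.
apply: outdeg_geM (IH _ Ha) _ => b /((stanley_reisnerP c).1 Ic) b_face.
by rewrite lt0n outdeg_eq0; apply: contra b_face => /faceS; apply.
Qed.

Lemma colon_facet F h : facet F -> I (h * 'X_[mnm_ind F]) <-> outdeg_ge F 1 h.
Proof.
move=> F_facet; rewrite stanley_reisnerP; split => [hF b hb | hF b].
  rewrite lt0n outdeg_eq0 -(facet_setU_face _ F_facet) -mnm_supp_ind_addm.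
  by apply: hF; rewrite (perm_mem (msuppMX _ _)) map_f.
rewrite (perm_mem (msuppMX _ _)) => /mapP [c /hF hc ->].
by rewrite mnm_supp_ind_addm facet_setU_face // -outdeg_eq0 -lt0n.
Qed.

Lemma facet_associated_prime F : facet F -> is_associated_prime I (outside_prime F).
Proof.
move=> F_facet; split; first exact: outside_prime_prime.
by exists 'X_[mnm_ind F] => h; rewrite outside_primeE colon_facet.
Qed.

Lemma symbolic_power_outdeg m f b A :
  symbolic_power I m f -> b \in msupp f -> face A -> (m <= outdeg A b)%N.
Proof.
move=> f_sym fb /face_sub_facet [F F_facet AF]; apply: leq_trans (outdegS _ AF).
have [s [g [s_out [Ig sf]]]] := f_sym _ (facet_associated_prime F_facet).
have s0 : (tlift F s)`_0 != 0 by apply/eqP.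
have sf_deg : outdeg_ge F m (s * f) by rewrite sf; apply: ideal_pow_outdeg_ge Ig; case: F_facet.
exact: outdeg_geMl_cancel s0 sf_deg b fb.
Qed.

Lemma ideal_pow_X_facet F k e : facet F -> (k <= outdeg F e)%N ->
  ideal_pow I k 'X_[(mnm_ind F *+ k + e)%MM].
Proof.
move=> [F_face F_max]; elim: k e => [|k IH] e ke //=.
have [j jF ej] : exists2 j, j \notin F & (0 < e j)%N.
  have : ~~ (mnm_supp e \subset F) by rewrite -outdeg_eq0 -lt0n (leq_trans _ ke).
  by case/subsetPn => j; rewrite inE => ej jF; exists j.
have [eE outdeg_e] := outdeg_subm1 jF ej.
have -> : (mnm_ind F *+ k.+1 + e = (mnm_ind F *+ k + (e - U_(j))) + (mnm_ind F + U_(j)))%MM.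
  by apply/mnmP => i; rewrite {1}eE !mnmDE !mulmnE mulnS; lia.
rewrite mpolyXD; apply: gen_ideal_sub; do 2 eexists; split; last split; last by [].
  by apply: IH; rewrite -ltnS -outdeg_e.
apply: gen_ideal_sub; exists (j |: F); split; first exact: F_max.
by rewrite prod_X_mnm_ind mnm_ind_setU1.
Qed.

Lemma symbolic_power_X m b :
  (forall A, face A -> (m <= outdeg A b)%N) -> symbolic_power I m 'X_[b].
Proof.
move=> b_deep P [[_ P1 _] [g Pg]].
have [c gc c_face] : exists2 c, c \in msupp g & face (mnm_supp c).
  apply/hasP; apply: contraT => /hasPn g_out; exfalso; apply: P1; apply/Pg.
  by rewrite mul1r; apply/stanley_reisnerP.
have [F F_facet cF] := face_sub_facet c_face.
exists 'X_[(mnm_ind F *+ m)%MM], 'X_[(mnm_ind F *+ m + b)%MM]; split; last split.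
- move/Pg/stanley_reisnerP/(_ (mnm_ind F *+ m + c)%MM)/implyP; apply/negP.
  rewrite negb_imply negbK mulrC (perm_mem (msuppMX _ _)) map_f //=.
  apply: faceS (proj1 F_facet).
  apply/subsetP => i; rewrite inE mnmDE mulmnE mnm_indE.
  by case: (boolP (i \in F)) => //= iF; rewrite add0n => ci; rewrite (subsetP cF) ?inE in iF.
- by apply: ideal_pow_X_facet => //; apply: b_deep; case: F_facet.
- by rewrite mpolyXD.
Qed.

End StanleyReisner.

Lemma deg_nonzerobP (K : fieldType) N (I : rset K N) t : deg_nonzerob I t <-> deg_nonzero I t.
Proof. by rewrite /deg_nonzerob; case: excluded_middle_informative. Qed.

Lemma alpha_leq (K1 K2 : fieldType) N1 N2 (I1 : rset K1 N1) (I2 : rset K2 N2) :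
  (exists t, deg_nonzero I1 t) -> (forall t, deg_nonzero I1 t -> deg_nonzero I2 t) ->
  (alpha I2 <= alpha I1)%N.
Proof.
move=> [t0 /deg_nonzerobP I1t0] I12; rewrite /alpha.
case: (excluded_middle_informative (exists t, deg_nonzerob I1 t)) => [ex1 | []];
  last by exists t0.
case: ex_minnP => t1 /deg_nonzerobP /I12 I2t1 _.
case: excluded_middle_informative => [ex2 | []]; last by exists t1; apply/deg_nonzerobP.
by case: ex_minnP => t2 _; apply; apply/deg_nonzerobP.
Qed.

Lemma deg_nonzero_X (K : fieldType) N (I : rset K N) b : I 'X_[b] -> deg_nonzero I (mdeg b).
Proof. by exists 'X_[b]; rewrite -msupp_eq0 /homog_deg msuppX /= eqxx. Qed.

Section Bipyramid.
Variable n : nat.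
Hypothesis n_gt0 : (0 < n)%N.

Lemma Bn_faceS (A B : {set 'I_n.+2}) : B \subset A -> @Bn_face n A -> @Bn_face n B.
Proof.
move=> BA /existsP [F /andP [F_facet AF]]; apply/existsP; exists F.
by rewrite F_facet (subset_trans BA AF).
Qed.

Lemma cycle_edge_range i j : cycle_edge n i j -> [/\ (1 <= i <= n)%N & (1 <= j <= n)%N].
Proof. rewrite /cycle_edge; lia. Qed.

Lemma Bn_face_apex (A : {set 'I_n.+2}) : @Bn_face n A -> (ord0 \notin A) || (ord_max \notin A).
Proof.
case/existsP => F /andP [/existsP [i /existsP [j /andP [ij F_eq]]] AF].
have [i_rng j_rng] := cycle_edge_range ij.
case/orP: F_eq => /eqP F_eq; apply/orP; [right | left]; apply: contra (subsetP AF _) _;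
  rewrite F_eq !inE -!val_eqE /=; lia.
Qed.

Lemma Bn_symbolic_power_apex (K : fieldType) m :
  symbolic_power (@SR_ideal K n) m 'X_[((U_(ord0) + U_(ord_max)) *+ m)%MM].
Proof.
apply: (symbolic_power_X Bn_faceS) => A /Bn_face_apex /orP [] Ax;
  apply: leq_trans (leq_outdeg _ Ax); rewrite mulmnE mnmDE !mnm1E -!val_eqE /=; lia.
Qed.

(* Vertex n+1 of B_(n+1) is skipped: the apex n+1 of B_n goes to the apex n+2. *)
Definition Bn_embed (v : 'I_n.+2) : 'I_n.+3 :=
  inord (if val v == n.+1 then n.+2 else val v).

Lemma Bn_embedE v : nat_of_ord (Bn_embed v) = if val v == n.+1 then n.+2 else val v.
Proof. by rewrite /Bn_embed inordK //; have := ltn_ord v; case: ifP => _ /=; lia. Qed.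

Lemma Bn_face_preimage (A : {set 'I_n.+3}) :
  @Bn_face n.+1 A -> @Bn_face n (Bn_embed @^-1: A).
Proof.
case/existsP => F /andP [/existsP [i /existsP [j /andP [ij F_eq]]] AF].
have [i_lt j_lt] := (ltn_ord i, ltn_ord j).
(* The edges {n, n+1} and {n+1, 1} of Q_(n+1) both collapse to the edge {n, 1} of Q_n. *)
pose i' : 'I_n.+2 := inord (if (i < n)%N then val i else n).
pose j' : 'I_n.+2 := inord (if (i < n)%N then (val i).+1 else 1%N).
have i'E : nat_of_ord i' = if (i < n)%N then val i else n.
  by rewrite /i' inordK //; case: ifP => /=; lia.
have j'E : nat_of_ord j' = if (i < n)%N then (val i).+1 else 1%N.
  by rewrite /j' inordK //; case: ifP => /=; lia.
have i'j' : cycle_edge n i' j'.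
  by move: ij; rewrite /cycle_edge i'E j'E; case: ifP => /=; lia.
apply/existsP; case/orP: F_eq => /eqP F_eq;
  [exists [set ord0; i'; j'] | exists [set ord_max; i'; j']]; apply/andP; split;
  try by apply/existsP; exists i'; apply/existsP; exists j'; rewrite i'j' eqxx ?orbT.
all: apply/subsetP => v; rewrite inE => /(subsetP AF); rewrite F_eq !inE -!val_eqE /=.
all: rewrite Bn_embedE i'E j'E; have := ltn_ord v; move: ij; rewrite /cycle_edge.
all: by case: (boolP (val v == n.+1)); case: (boolP (i < n)%N) => /=; lia.
Qed.

End Bipyramid.

Theorem proposition3p13 (K : fieldType) (n m : nat) :
  (3 <= n)%N -> (1 <= m)%N -> (alpha_nm K n.+1 m <= alpha_nm K n m)%N.
Proof.
move=> n_ge3 _; have n_gt0 : (0 < n)%N by apply: leq_trans n_ge3.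
apply: alpha_leq; first by eexists; apply/deg_nonzero_X/(Bn_symbolic_power_apex n_gt0).
move=> t [f [f_sym [f_neq0 f_homog]]].
have [b fb] : exists b, b \in msupp f.
  by case E: (msupp f) f_neq0 => [|b s]; rewrite -msupp_eq0 E //; exists b; rewrite mem_head.
rewrite -(eqP (allP f_homog b fb)) -(mdeg_push (@Bn_embed n)); apply: deg_nonzero_X.
apply: (symbolic_power_X (@Bn_faceS n.+1)) => A A_face.
rewrite outdeg_push; apply: (symbolic_power_outdeg (@Bn_faceS n) f_sym fb).
exact (Bn_face_preimage n_gt0 A_face).
Qed.
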